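(* Let $k\geq 2$, let $A_1\subseteq A_2$ be sets, and let $F_1\colon[A_1]^k\to\mathcal{P}(A_1)$ and $F_2\colon[A_2]^k\to\mathcal{P}(A_2)$. Let $\Gamma_1,\Gamma_2$ be sets of functions such that $\Gamma_i$ $k$-generates $F_i$ for $i=1,2$, and suppose $\Gamma_2|_{A_1}\subseteq\Gamma_1$. Then for every $\bar\gamma\in[A_1]^k$ we have $F_1(\bar\gamma)\subseteq F_2(\bar\gamma)$.
   Context: For a set $S$ and $k<\omega$, $[S]^k$ is the set of $k$-element subsets of $S$. Let $A$ be a set and $k\geq 2$. Let $\Gamma$ be a set of functions of the form $\rho\colon[A]^2\to L_\rho$, where each $L_\rho$ is a linear order with order $<_\rho$ (formally $\Gamma$ is a set of pairs $(\rho,L_\rho)$). A map $F\colon[A]^k\to\mathcal{P}(A)$ is said to be $k$-generated by $\Gamma$ if for all $\bar\gamma\in[A]^k$: $x\in F(\bar\gamma)$ if and only if $x\in A$ and for every $\rho\in\Gamma$ and every $\gamma\in\bar\gamma$ there exist $\gamma'\neq\gamma''$ in $\bar\gamma$ with $\rho\{x,\gamma\}\leq_\rho\rho\{\gamma',\gamma''\}$. For $B\subseteq A$, $\Gamma|_B=\{\rho|_{[B]^2}:\rho\in\Gamma\}$ (each with the same linear order $L_\rho$). *)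

From HB Require Import structures.
From mathcomp Require Import all_boot all_order.
From mathcomp Require Import finmap.
Set Implicit Arguments. Unset Strict Implicit. Unset Printing Implicit Defensive.
Local Open Scope fset_scope.

(* A member of Gamma: a linear order L_rho (with its display) together with
   rho, where rho{x,y} is represented by rho x y (only values on distinct
   pairs from the relevant set A matter). *)
Record gfun (U : Type) := GFun {
  gd : Order.disp_t;
  gL : orderType gd;
  grho : U -> U -> gL }.
Arguments GFun {U gd gL} grho.

Definition kset (U : choiceType) (A : U -> Prop) (k : nat) (s : {fset U}) : Prop :=
  #|` s| = k /\ (forall x, x \in s -> A x).

Definition k_generated (U : choiceType) (k : nat) (A : U -> Prop)
    (Gamma : gfun U -> Prop) (F : {fset U} -> U -> Prop) : Prop :=
  forall s, kset A k s -> forall x,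
    F s x <->
    (A x /\ forall g, Gamma g -> forall c, c \in s -> c <> x ->
       exists c1 c2, [/\ c1 \in s, c2 \in s, c1 <> c2 &
                        (grho g x c <= grho g c1 c2)%O]).

(* Gamma2|_A ⊆ Gamma1: the restriction of each rho in Gamma2 to [A]^2,
   with the same linear order, belongs to Gamma1. *)
Definition restr_sub (U : Type) (A : U -> Prop) (G2 G1 : gfun U -> Prop) : Prop :=
  forall g, G2 g -> exists rho' : U -> U -> gL g,
    G1 (GFun rho') /\
    (forall x y, A x -> A y -> x <> y -> rho' x y = grho g x y).

From HB Require Import structures.
From mathcomp Require Import all_boot all_order.
From mathcomp Require Import finmap.

(* Membership of x in F(s) is a condition on the values of each rho at pairs
   from s and {x}. For rho in Gamma2 its restriction rho' lies in Gamma1, and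
   since s and x lie in A1, rho' takes the same values as rho on those pairs;
   so the pair witnessing the condition for rho' witnesses it for rho. *)

Section Monotonicity.

Context {U : choiceType}.

Lemma kset_sub {k : nat} {A1 A2 : U -> Prop} {s : {fset U}} :
  (forall x, A1 x -> A2 x) -> kset A1 k s -> kset A2 k s.
Proof. by move=> A12 [card_s sA1]; split=> // y /sA1/A12. Qed.

Definition generating_condition (G : gfun U -> Prop) (s : {fset U}) (x : U) :=
  forall g, G g -> forall c, c \in s -> c <> x ->
    exists c1 c2, [/\ c1 \in s, c2 \in s, c1 <> c2 &
                     (grho g x c <= grho g c1 c2)%O].

Lemma generating_condition_restr (A1 : U -> Prop) (G1 G2 : gfun U -> Prop)
    (s : {fset U}) (x : U) :
  restr_sub A1 G2 G1 -> (forall y, y \in s -> A1 y) -> A1 x ->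
  generating_condition G1 s x -> generating_condition G2 s x.
Proof.
move=> restr sA1 A1x cond1 g G2g c cs cx.
have [rho' [G1rho' rho'E]] := restr g G2g.
have [c1 [c2 [c1s c2s c12 le_rho']]] := cond1 _ G1rho' c cs cx.
exists c1, c2; split=> //.
by rewrite -!rho'E //; [exact: sA1 | exact: sA1 | exact: sA1 | exact: nesym].
Qed.

End Monotonicity.

Theorem lemma2p3 (U : choiceType) (k : nat) (A1 A2 : U -> Prop)
    (F1 F2 : {fset U} -> U -> Prop) (G1 G2 : gfun U -> Prop) :
  2 <= k ->
  (forall x, A1 x -> A2 x) ->
  k_generated k A1 G1 F1 ->
  k_generated k A2 G2 F2 ->
  restr_sub A1 G2 G1 ->
  forall s, kset A1 k s -> forall x, F1 s x -> F2 s x.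
Proof.
(* k >= 2 only makes [A]^k nondegenerate; the inclusion holds for every k. *)
move=> _ A12 gen1 gen2 restr s ks1 x F1x.
have [A1x cond1] := (gen1 s ks1 x).1 F1x.
apply/(gen2 s (kset_sub A12 ks1) x); split; first exact: A12.
exact: generating_condition_restr restr ks1.2 A1x cond1.
Qed.
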